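(* In the setting described in the context, $\displaystyle\sum_{i=0}^{t-1}w_i^2=\frac{q^2+(t+1)q+1}{t}$.
   Context: Let $q=p^h$ with $p$ prime, $h\ge1$. Let $\alpha$ be a primitive element of $\mathbb{F}_{q^3}$; the points of $PG(2,q)$ are the 1-dimensional $\mathbb{F}_q$-subspaces of $\mathbb{F}_{q^3}$, and $P_i$ denotes the point represented by $\alpha^i$, so $PG(2,q)=\{P_0,\dots,P_{q^2+q}\}$. Let $\tau:P_i\mapsto P_{ip\bmod(q^2+q+1)}$ (a collineation) and let $\ell_0$ be a line of $PG(2,q)$ fixed by $\tau$. Let $t$ be a positive divisor of $q^2+q+1$ and for $i=0,\dots,t-1$ let $O_i=\{P_u:u\equiv i\pmod t\}$. For $u=0,\dots,t-1$ let $w_u=|\ell_0\cap O_u|$. *)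

From HB Require Import structures.
From mathcomp Require Import all_boot all_order all_algebra all_field.
Set Implicit Arguments. Unset Strict Implicit. Unset Printing Implicit Defensive.
Import GRing.Theory.
Local Open Scope ring_scope.

Section PG.
Variables (L : finFieldType) (q : nat) (alpha : L).

Definition Fq : {set L} := [set x : L | x ^+ q == x].

Definition Npts : nat := (q ^ 2 + q + 1)%N.

Definition Pt (i : nat) : {set L} := [set c * alpha ^+ i | c in Fq].

Definition PG2 : {set {set L}} := [set Pt (val i) | i : 'I_Npts].

Definition is_subspace2 (U : {set L}) : Prop :=
  [/\ 0 \in U,
      {in U &, forall x y, x + y \in U},
      {in Fq & U, forall c x, c * x \in U}
    & #|U| = (q ^ 2)%N].

Definition line_of (U : {set L}) : {set {set L}} :=
  [set P in PG2 | P \subset U].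

Definition is_line (l : {set {set L}}) : Prop :=
  exists U : {set L}, is_subspace2 U /\ l = line_of U.

Definition Orb (t u : nat) : {set {set L}} :=
  [set Pt (val i) | i : 'I_Npts & (val i %% t == u)%N].

End PG.

(* Points of PG(2,q) correspond to exponents modulo N = q^2+q+1, and the exponents D
   of the points of a line U form a planar difference set modulo N.  Indeed, if alpha^k
   maps two distinct points of U into U, it stabilizes U; were it not in F_q, an
   element x of U and alpha^k x would span U, making alpha^k quadratic over F_q, which
   is impossible in the cubic extension F_(q^3).  So the |D|(|D|-1) = N-1 ordered pairs
   of distinct elements of D realize every nonzero difference modulo N exactly once.
   Now sum_u w_u^2 counts the pairs (i,j) in D^2 with i = j mod t: the q+1 diagonal
   pairs and one pair for each of the N/t - 1 nonzero multiples of t modulo N, in total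
   q + N/t = (q^2 + (t+1)q + 1)/t. *)

From HB Require Import structures.
From mathcomp Require Import all_boot all_order all_algebra all_field.
From mathcomp Require Import zify ring.
Import GRing.Theory.
Set Implicit Arguments. Unset Strict Implicit. Unset Printing Implicit Defensive.

Lemma sum_sqr_card_fibers (T : finType) (A : {set T}) (f : T -> nat) (t : nat) :
  (forall x, f x < t)%N ->
  (\sum_(u < t) #|[set x in A | f x == u]| ^ 2)%N =
  #|[set p in setX A A | f p.1 == f p.2]|.
Proof.
move=> ft; rewrite -sum1_card (partition_big (fun p => Ordinal (ft p.1)) predT) //=.
apply: eq_bigr => u _; rewrite -mulnn -cardsX -sum1_card; apply: eq_bigl => -[x y].
rewrite !inE -(inj_eq val_inj) /=.
by case: (f x =P u) => [->|]; rewrite ?andbT ?andbF // eq_sym; case: (_ \in A).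
Qed.

Section DifferenceSet.
Variables (N : nat) (N_gt0 : 0 < N).

Definition diffmod (i j : 'I_N) : 'I_N := Ordinal (ltn_pmod (i + N - j) N_gt0).

Lemma diffmodK (i j : 'I_N) : ((diffmod i j + j) %% N = i)%N.
Proof.
rewrite /= modnDml subnK; last by rewrite (leq_trans (ltnW (ltn_ord j))) // leq_addl.
by rewrite modnDr modn_small.
Qed.

Lemma diffmod_eq0 (i j : 'I_N) : (diffmod i j == 0 :> nat) = (i == j).
Proof.
apply/eqP/eqP => [h|->]; last by rewrite /= addKn modnn.
by apply: val_inj; rewrite -[val i](diffmodK i j) h add0n modn_small.
Qed.

Lemma dvdn_diffmod (t : nat) (i j : 'I_N) :
  (t %| N)%N -> (t %| diffmod i j)%N = (i == j %[mod t]).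
Proof.
move=> tN; rewrite /= /dvdn (modn_dvdm _ tN) -/(dvdn t _) -eqn_mod_dvd; last first.
  by rewrite (leq_trans (ltnW (ltn_ord j))) // leq_addl.
by rewrite -modnDmr (eqP tN) addn0.
Qed.

Lemma card_dvdn_ord (t : nat) :
  (0 < t)%N -> (t %| N)%N -> #|[set k : 'I_N | t %| k]| = (N %/ t)%N.
Proof.
move=> t0 tN.
have mult_lt (s : 'I_(N %/ t)) : (s * t < N)%N by rewrite -ltn_divRL ?ltn_ord.
have -> : [set k : 'I_N | t %| k] = [set Ordinal (mult_lt s) | s : 'I_(N %/ t)].
  apply/setP => k; rewrite inE; apply/idP/imsetP => [/dvdnP [s ks]|[s _ ->]].
    have s_lt : (s < N %/ t)%N by rewrite ltn_divRL // -ks.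
    by exists (Ordinal s_lt) => //; apply: val_inj.
  exact: dvdn_mull.
rewrite card_imset ?card_ord // => a b /(congr1 val) /= /eqP.
by rewrite eqn_pmul2r // => /eqP /val_inj.
Qed.

Definition offdiag (D : {set 'I_N}) := setX D D :\: [set p | p.1 == p.2].

Lemma card_diag (D : {set 'I_N}) : #|setX D D :&: [set p | p.1 == p.2]| = #|D|.
Proof.
rewrite -(@card_imset _ _ (fun i => (i, i)) D); last by move=> i j [].
apply: eq_card => -[a b]; rewrite !inE /=; apply/idP/imsetP.
  by case/andP => /andP [ha _] /eqP <-; exists a.
by case=> c hc [-> ->]; rewrite hc eqxx.
Qed.

Lemma card_offdiag (D : {set 'I_N}) : #|offdiag D| = (#|D| * (#|D| - 1))%N.
Proof.
by rewrite mulnBr muln1 -cardsX -card_diag -(cardsID [set p | p.1 == p.2] (setX D D)) addKn.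
Qed.

Variable D : {set 'I_N}.
Hypotheses (cardD : (#|D| * (#|D| - 1) = N - 1)%N)
  (diffmodD_inj : {in offdiag D &, injective (fun p => diffmod p.1 p.2)}).

Lemma diffmod_offdiag :
  [set diffmod p.1 p.2 | p in offdiag D] = [set k : 'I_N | k != 0 :> nat].
Proof.
apply/eqP; rewrite eqEcard card_in_imset // card_offdiag cardD.
have -> : #|[set k : 'I_N | k != 0 :> nat]| = (N - 1)%N.
  rewrite subn1 -[N in N.-1]card_ord -(cardsC1 (Ordinal N_gt0)).
  by apply: eq_card => k; rewrite !inE -(inj_eq val_inj).
rewrite leqnn andbT; apply/subsetP => _ /imsetP [p + ->].
by rewrite !inE diffmod_eq0 => /andP [].
Qed.

Lemma card_pairs_eqmod (t : nat) : 0 < t -> t %| N ->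
  #|[set p in setX D D | p.1 == p.2 %[mod t]]| = #|D| + N %/ t - 1.
Proof.
move=> t_gt0 tN; set P := [set p in _ | _]; set B := [set p : 'I_N * 'I_N | p.1 == p.2].
rewrite -(cardsID B P).
have -> : P :&: B = setX D D :&: B.
  apply/setP => -[i j]; rewrite !inE /=.
  by case: (i =P j) => [->|]; rewrite ?eqxx ?andbF ?andbT.
set K := [set k : 'I_N | t %| k].
have -> : P :\: B = offdiag D :&: [set p | diffmod p.1 p.2 \in K].
  by apply/setP => p; rewrite !inE dvdn_diffmod // andbA.
rewrite card_diag -(card_in_imset (f := fun p => diffmod p.1 p.2)) => [|p p']; last first.
  by move=> /setIP [? _] /setIP [? _]; apply: diffmodD_inj.
have -> : [set diffmod p.1 p.2 | p in offdiag D :&: [set p | diffmod p.1 p.2 \in K]] =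
          [set diffmod p.1 p.2 | p in offdiag D] :&: K.
  apply/setP => k; apply/imsetP/setIP => [[p /setIP [pD]]|[/imsetP [p pD ->] kK]].
    by rewrite inE => pK ->; split; first exact: imset_f.
  by exists p; rewrite // inE pD inE.
rewrite diffmod_offdiag.
have := cardsD1 (Ordinal N_gt0) K; rewrite card_dvdn_ord // inE dvdn0 add1n => ->.
rewrite addnS subn1 /=; congr (_ + _)%N; apply: eq_card => k.
by rewrite !inE -(inj_eq val_inj).
Qed.
End DifferenceSet.

Lemma Npts_gt0 (q : nat) : 0 < Npts q.
Proof. by rewrite /Npts addn1. Qed.

Lemma expn3_sub1 (q : nat) : q ^ 3 - 1 = (q - 1) * Npts q.
Proof. rewrite /Npts; nia. Qed.

Local Open Scope ring_scope.

Section SingerCycle.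
Variables (L : finFieldType) (q : nat) (alpha : L).
Hypotheses (cardL : #|L| = (q ^ 3)%N) (q_gt1 : (1 < q)%N)
  (alpha_prim : (q ^ 3 - 1)%N.-primitive_root alpha)
  (frobD : forall x y : L, (x + y) ^+ q = x ^+ q + y ^+ q).

Local Notation N := (Npts q).
Local Notation F := (Fq L q).

Let q_gt0 : (0 < q)%N. Proof. exact: ltnW. Qed.

Let q3_gt1 : (1 < q ^ 3)%N.
Proof. by rewrite (ltn_trans q_gt1) // -{1}(expn1 q) ltn_exp2l. Qed.

Lemma exp_alpha_neq0 (m : nat) : alpha ^+ m != 0.
Proof.
by rewrite expf_neq0 // (prim_root_eq0 alpha_prim) -lt0n subn_gt0.
Qed.

Lemma exp_alpha_surj (x : L) : x != 0 -> exists m, x = alpha ^+ m.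
Proof.
move=> x_neq0; suff /(prim_rootP alpha_prim) [m ->] : x ^+ (q ^ 3 - 1) = 1.
  by exists m.
apply: (mulfI x_neq0); rewrite mulr1 -exprS subn1 prednK ?(ltnW q3_gt1) //.
by rewrite -cardL expf_card.
Qed.

Lemma exp_alpha_in_Fq (m : nat) : (alpha ^+ m \in F) = (N %| m)%N.
Proof.
rewrite inE -exprM (eq_prim_root_expr alpha_prim) eqn_mod_dvd ?leq_pmulr //.
by rewrite expn3_sub1 -{2}(muln1 m) -mulnBr mulnC dvdn_pmul2r // subn_gt0.
Qed.

Lemma exp_alpha_eq_mod (i j : nat) : alpha ^+ i = alpha ^+ j -> i = j %[mod N].
Proof.
move/eqP; rewrite (eq_prim_root_expr alpha_prim) expn3_sub1 => /eqP e.
by rewrite -(modn_dvdm i (dvdn_mull (q - 1) (dvdnn N))) e modn_dvdm // dvdn_mull.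
Qed.

Lemma Fq0 : 0 \in F. Proof. by rewrite inE expr0n eqn0Ngt q_gt0. Qed.

Lemma Fq1 : 1 \in F. Proof. by rewrite inE expr1n. Qed.

Lemma FqD (x y : L) : x \in F -> y \in F -> x + y \in F.
Proof. by rewrite !inE frobD => /eqP -> /eqP ->. Qed.

Lemma FqN (x : L) : x \in F -> - x \in F.
Proof.
have frobN : (- x) ^+ q = - x ^+ q.
  by apply/eqP; rewrite -addr_eq0 -frobD addNr expr0n eqn0Ngt q_gt0.
by rewrite !inE frobN => /eqP ->.
Qed.

Lemma FqB (x y : L) : x \in F -> y \in F -> x - y \in F.
Proof. by move=> Fx Fy; rewrite FqD ?FqN. Qed.

Lemma FqM (x y : L) : x \in F -> y \in F -> x * y \in F.
Proof. by rewrite !inE exprMn => /eqP -> /eqP ->. Qed.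

Lemma FqV (x : L) : x \in F -> x^-1 \in F.
Proof. by rewrite !inE exprVn => /eqP ->. Qed.

Lemma card_Fq : #|F| = q.
Proof.
have Fq_exps : F = 0 |: [set alpha ^+ (val j * N) | j : 'I_(q - 1)].
  apply/setP => x; rewrite in_setU1; apply/idP/idP.
    have [->|/exp_alpha_surj [m ->]] := eqVneq x 0; first by [].
    rewrite exp_alpha_in_Fq => /dvdnP [k ->]; apply/orP; right; apply/imsetP.
    have k_lt : (k %% (q - 1) < q - 1)%N by rewrite ltn_mod subn_gt0.
    exists (Ordinal k_lt) => //=; apply/eqP; rewrite (eq_prim_root_expr alpha_prim).
    by rewrite expn3_sub1 muln_modl ?modn_mod.
  case/orP => [/eqP ->|/imsetP [j _ ->]]; first exact: Fq0.
  by rewrite exp_alpha_in_Fq dvdn_mull.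
rewrite Fq_exps cardsU1 card_imset ?card_ord.
  have /negPf -> : 0 \notin [set alpha ^+ (val j * N) | j : 'I_(q - 1)].
    by apply/imsetP => -[j _ /eqP]; rewrite eq_sym (negPf (exp_alpha_neq0 _)).
  by rewrite add1n subn1 prednK.
have jN_lt (j : 'I_(q - 1)) : (j * N < q ^ 3 - 1)%N.
  by rewrite expn3_sub1 ltn_pmul2r ?Npts_gt0.
move=> i j /eqP; rewrite (eq_prim_root_expr alpha_prim) !modn_small ?jN_lt //.
by rewrite eqn_pmul2r ?Npts_gt0 // => /eqP /val_inj.
Qed.

(* Otherwise c^q = b - c is the other root, so c^(q^2) = c, and c = c^(q^3) = c^q:
   the odd degree [L : F] = 3 leaves no room for a quadratic element. *)
Lemma Fq_quadratic (a b c : L) :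
  a \in F -> b \in F -> c ^+ 2 = a + b * c -> c \in F.
Proof.
rewrite !inE => /eqP Fa /eqP Fb c_root; set d := c ^+ q.
have d_root : d ^+ 2 = a + b * d.
  by rewrite /d -exprM mulnC exprM c_root frobD exprMn Fa Fb.
have [//|d_neq_c] := eqVneq d c.
have : (d - c) * (d + c - b) = 0.
  have -> : (d - c) * (d + c - b) = (d ^+ 2 - c ^+ 2) - b * (d - c) by ring.
  by rewrite d_root c_root; ring.
move/eqP; rewrite mulf_eq0 subr_eq0 (negPf d_neq_c) /= subr_eq0 => /eqP dcb.
have d_conj : d = b - c by rewrite -dcb addrK.
have dq : d ^+ q = c.
  have frobN : (- c) ^+ q = - d.
    by apply/eqP; rewrite -addr_eq0 -frobD addNr expr0n eqn0Ngt q_gt0.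
  by rewrite {1}d_conj frobD frobN Fb d_conj opprB addrC subrK.
have : c ^+ (q ^ 3) = d by rewrite (expnS q 2) mulnC exprM expnS expn1 exprM -/d dq.
by rewrite -cardL expf_card => /esym/eqP; rewrite (negPf d_neq_c).
Qed.

Lemma Pt_inj_mod (i j : nat) : Pt q alpha i = Pt q alpha j -> i = j %[mod N].
Proof.
move=> e; have : alpha ^+ i \in Pt q alpha j.
  by rewrite -e; apply/imsetP; exists 1; rewrite ?Fq1 ?mul1r.
case/imsetP => c Fc ec.
have /exp_alpha_surj [m em] : c != 0.
  by apply: contraNneq (exp_alpha_neq0 i) => c0; rewrite ec c0 mul0r.
move: Fc; rewrite em exp_alpha_in_Fq => /dvdnP [s ms].
by move: ec; rewrite em -exprD => /exp_alpha_eq_mod ->; rewrite ms modnMDl.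
Qed.

Section Subspace.
Variable U : {set L}.
Hypothesis U2 : is_subspace2 q U.

Lemma subspace2_span (x y : L) :
  x \in U -> y \in U -> x != 0 -> (forall a, a \in F -> y != a * x) ->
  forall z, z \in U -> exists a b, [/\ a \in F, b \in F & z = a * x + b * y].
Proof.
case: U2 => _ UD UZ cardU xU yU x_neq0 y_indep z zU.
pose S := [set u.1 * x + u.2 * y | u in setX F F].
have S_sub_U : S \subset U.
  by apply/subsetP => _ /imsetP [[a b] /setXP [Fa Fb] ->]; apply: UD; apply: UZ.
have cardS : #|S| = (q ^ 2)%N.
  rewrite card_in_imset ?cardsX ?card_Fq ?mulnn //.
  move=> [a b] [a' b'] /setXP [Fa Fb] /setXP [Fa' Fb'] /= e.
  have [eb|b_neq] := eqVneq b b'.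
    by move: e; rewrite -eb => /addIr /(mulIf x_neq0) ->.
  have : y = ((a' - a) / (b - b')) * x.
    rewrite mulrAC -[(a' - a) * x](_ : (b - b') * y = _); last first.
      by apply/eqP; rewrite -subr_eq0 -(subrr (a * x + b * y)) {2}e; apply/eqP; ring.
    by rewrite mulrAC mulfV ?mul1r // subr_eq0.
  by move/eqP; rewrite (negPf (y_indep _ _)) // FqM ?FqV ?FqB.
have /eqP S_eq_U : S == U by rewrite eqEcard S_sub_U cardS cardU leqnn.
by move: zU; rewrite -S_eq_U => /imsetP [[a b] /setXP [Fa Fb] ->]; exists a, b.
Qed.

Lemma subspace2_stab_Fq (c : L) : {in U, forall z, c * z \in U} -> c \in F.
Proof.
case: U2 => U0 _ _ cardU cU.
have [x] : exists x, x \in U :\ 0.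
  apply/set0Pn; rewrite -card_gt0 -(ltn_add2l 1) addn0.
  by rewrite -[X in (X + _)%N]/(nat_of_bool true) -U0 -cardsD1 cardU (ltn_exp2l 0 2 q_gt1).
rewrite in_setD1 => /andP [x_neq0 xU].
have [a /andP [Fa /eqP /(mulIf x_neq0) ->] //|c_indep] :=
  pickP [pred a | (a \in F) && (c * x == a * x)].
have {}c_indep a : a \in F -> c * x != a * x.
  by move=> Fa; move: (c_indep a); rewrite /= Fa => /negbT.
have [a [b [Fa Fb e]]] := subspace2_span xU (cU _ xU) x_neq0 c_indep (cU _ (cU _ xU)).
apply: (Fq_quadratic Fa Fb); apply: (mulIf x_neq0).
by rewrite expr2 -mulrA e; ring.
Qed.

Lemma exp_alpha_in_subspace2_mod (m : nat) :
  (alpha ^+ m \in U) = (alpha ^+ (m %% N) \in U).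
Proof.
case: U2 => _ _ UZ _; set c := alpha ^+ (m %/ N * N).
have Fc : c \in F by rewrite exp_alpha_in_Fq dvdn_mull.
have em : alpha ^+ m = c * alpha ^+ (m %% N) by rewrite -exprD -divn_eq.
apply/idP/idP => [mU|/(UZ _ _ Fc)]; last by rewrite em.
have -> : alpha ^+ (m %% N) = c^-1 * alpha ^+ m by rewrite em mulKf ?exp_alpha_neq0.
exact: UZ (FqV Fc) mU.
Qed.

Lemma Pt_subset (i : nat) : (Pt q alpha i \subset U) = (alpha ^+ i \in U).
Proof.
case: U2 => _ _ UZ _; apply/subsetP/idP => [PU|iU _ /imsetP [c Fc ->]].
  by rewrite -[alpha ^+ i]mul1r PU //; apply/imsetP; exists 1; rewrite ?Fq1.
exact: UZ.
Qed.

Lemma subspace2_shift_dvd (j j' k : nat) : (j < N)%N -> (j' < N)%N -> j != j' ->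
  alpha ^+ j \in U -> alpha ^+ j' \in U ->
  alpha ^+ (k + j) \in U -> alpha ^+ (k + j') \in U -> (N %| k)%N.
Proof.
move=> j_lt j'_lt j_neq xU x'U cxU cx'U; rewrite -exp_alpha_in_Fq.
case: U2 => _ UD UZ _; apply: subspace2_stab_Fq => z zU.
have x'_indep a : a \in F -> alpha ^+ j' != a * alpha ^+ j.
  move=> Fa; apply/eqP => ea.
  have /exp_alpha_surj [m em] : a != 0.
    by apply: contraNneq (exp_alpha_neq0 j') => a0; rewrite ea a0 mul0r.
  move: Fa ea; rewrite em exp_alpha_in_Fq -exprD => /dvdnP [s ->] /exp_alpha_eq_mod.
  by rewrite modnMDl !modn_small // => ejj; rewrite ejj eqxx in j_neq.
have [a [b [Fa Fb ->]]] := subspace2_span xU x'U (exp_alpha_neq0 j) x'_indep zU.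
by rewrite mulrDr mulrCA [_ * (b * _)]mulrCA -!exprD UD ?UZ.
Qed.

Definition exp_set : {set 'I_N} := [set i : 'I_N | alpha ^+ i \in U].

Lemma card_exp_set : #|exp_set| = q.+1.
Proof.
case: U2 => U0 _ _ cardU.
pose g (sr : 'I_(q - 1) * 'I_N) := alpha ^+ (sr.1 * N + sr.2).
have sr_lt (sr : 'I_(q - 1) * 'I_N) : (sr.1 * N + sr.2 < q ^ 3 - 1)%N.
  rewrite expn3_sub1 (leq_trans (_ : _ < sr.1.+1 * N)%N) //.
    by rewrite mulSn addnC ltn_add2r.
  by rewrite leq_mul2r ltn_ord orbT.
have g_inj : injective g.
  move=> [s r] [s' r'] /eqP; rewrite /g (eq_prim_root_expr alpha_prim) !modn_small //.
  move=> /eqP e; have er : r = r' :> nat.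
    by rewrite -(modn_small (ltn_ord r)) -(modn_small (ltn_ord r')) -(modnMDl s) e modnMDl.
  move: e; rewrite er => /addIn /eqP; rewrite eqn_pmul2r ?Npts_gt0 // => /eqP es.
  by congr pair; apply: val_inj.
have g_im : g @: setX [set: 'I_(q - 1)] exp_set = U :\ 0.
  apply/setP => x; rewrite in_setD1; apply/imsetP/andP => [[[s r]]|[x_neq0 xU]].
    rewrite !inE => rD ->; rewrite exp_alpha_neq0 exp_alpha_in_subspace2_mod /=.
    by rewrite modnMDl modn_small.
  have [m xm] := exp_alpha_surj x_neq0; rewrite xm in xU *.
  set m' := (m %% (q ^ 3 - 1))%N.
  have em : alpha ^+ m = alpha ^+ m'.
    by apply/eqP; rewrite (eq_prim_root_expr alpha_prim) modn_mod.
  have m'_lt : (m' < (q - 1) * N)%N.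
    by rewrite -expn3_sub1 ltn_pmod // subn_gt0.
  have s_lt : (m' %/ N < q - 1)%N by rewrite ltn_divLR ?Npts_gt0 // mulnC.
  exists (Ordinal s_lt, Ordinal (ltn_pmod m' (Npts_gt0 q))).
    by rewrite !inE /= -exp_alpha_in_subspace2_mod -em.
  by rewrite /g /= -divn_eq em.
move: (congr1 (fun A : {set L} => #|A|) g_im).
rewrite /= card_imset // cardsX cardsT card_ord.
have -> : #|U :\ 0| = ((q - 1) * q.+1)%N.
  by apply/eqP; rewrite -(eqn_add2l 1) -[X in (X + _)%N]/(nat_of_bool true) -U0
    -cardsD1 cardU; apply/eqP; nia.
by move/eqP; rewrite eqn_pmul2l ?subn_gt0 // => /eqP.
Qed.

Lemma card_line_Orb (t u : nat) :
  #|line_of q alpha U :&: Orb q alpha t u| = #|[set i in exp_set | (i %% t == u)%N]|.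
Proof.
have -> : line_of q alpha U :&: Orb q alpha t u =
    (fun i : 'I_N => Pt q alpha i) @: [set i in exp_set | (i %% t == u)%N].
  apply/setP => P; rewrite !inE; apply/andP/imsetP.
    case=> /andP [_ PU] /imsetP [i]; rewrite inE => iu eP.
    by exists i => //; rewrite !inE iu andbT -Pt_subset -eP.
  case=> i; rewrite !inE => /andP [iU iu] ->; rewrite Pt_subset iU andbT.
  by split; apply/imsetP; exists i; rewrite ?inE.
rewrite card_in_imset // => i j _ _ /Pt_inj_mod.
by rewrite !modn_small // => /val_inj.
Qed.

Lemma exp_set_diffmod_inj :
  {in offdiag exp_set &, injective (fun p => diffmod (Npts_gt0 q) p.1 p.2)}.
Proof.
move=> [i j] [i' j']; rewrite !inE /= => /andP [ij_neq /andP [iU jU]].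
move=> /andP [_ /andP [i'U j'U]] e.
have [ejj|jj_neq] := eqVneq j j'.
  rewrite -ejj in e *; congr pair; apply: val_inj.
  by rewrite -[val i](diffmodK (Npts_gt0 q) i j) e diffmodK.
have k_dvd : (N %| diffmod (Npts_gt0 q) i j)%N.
  apply: (subspace2_shift_dvd (ltn_ord j) (ltn_ord j') jj_neq jU j'U).
    by rewrite exp_alpha_in_subspace2_mod diffmodK.
  by rewrite exp_alpha_in_subspace2_mod e diffmodK.
by move: k_dvd; rewrite /dvdn modn_small ?ltn_ord // diffmod_eq0 (negPf ij_neq).
Qed.

End Subspace.

End SingerCycle.

Theorem lemma2 (p h : nat) (L : finFieldType) (alpha : L)
    (l0 : {set {set L}}) (t : nat) :
  prime p -> (0 < h)%N ->
  #|L| = ((p ^ h) ^ 3)%N ->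
  ((p ^ h) ^ 3 - 1)%N.-primitive_root alpha ->
  is_line (p ^ h) alpha l0 ->
  (forall i : nat, (i < Npts (p ^ h))%N ->
     (Pt (p ^ h) alpha i \in l0) =
     (Pt (p ^ h) alpha ((i * p) %% Npts (p ^ h)) \in l0)) ->
  (0 < t)%N -> (t %| Npts (p ^ h))%N ->
  ((\sum_(u < t) #|l0 :&: Orb (p ^ h) alpha t u| ^ 2)%N)%:R =
    (((p ^ h) ^ 2 + (t + 1) * (p ^ h) + 1)%N)%:R / (t%:R : rat).
Proof.
move=> p_prime h_gt0 cardL alpha_prim [U [U2 ->]] _ t_gt0 tN.
have frobD (x y : L) : (x + y) ^+ (p ^ h) = x ^+ (p ^ h) + y ^+ (p ^ h).
  apply: exprDn_pchar; rewrite pnatX pnatE // (@card_finPcharP L p (h * 3)) //.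
  by rewrite cardL expnM.
have q_gt1 : (1 < p ^ h)%N by rewrite -(ltn_exp2l 0 h (prime_gt1 p_prime)) in h_gt0.
set q := (p ^ h)%N.
under eq_bigr do rewrite card_line_Orb //.
rewrite sum_sqr_card_fibers => [|i]; last exact: ltn_pmod.
rewrite (card_pairs_eqmod (N_gt0 := Npts_gt0 q)) ?card_exp_set //; last 2 first.
- by rewrite /Npts; nia.
- exact: exp_set_diffmod_inj.
have t_neq0 : (t%:R : rat) != 0 by rewrite Num.Theory.pnatr_eq0 -lt0n.
apply: (mulIf t_neq0); rewrite divfK // -!natrM; congr (_%:R).
have := divnK tN; rewrite /Npts => e; rewrite addSn subn1 /= mulnDl e; nia.
Qed.
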